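(* Let $f:[a,b]\to\mathbb{C}$ be continuous and write $f=g+ih$ with $g,h:[a,b]\to\mathbb{R}$ its real and imaginary parts. Then: (1) $\dim_H(G(g+ih))\ge \max\{\dim_H(G(g)),\dim_H(G(h))\}$; (2) if $h$ is Lipschitz, then $\dim_H(G(g+ih))=\dim_H(G(g))$.
   Context: For a function $u$ on $[a,b]$, $G(u)=\{(x,u(x)):x\in[a,b]\}$ denotes its graph; for complex-valued $u$ the graph is regarded as a subset of $\mathbb{R}\times\mathbb{C}\cong\mathbb{R}^3$ with the Euclidean metric, for real-valued $u$ as a subset of $\mathbb{R}^2$. $\dim_H$ denotes Hausdorff dimension. *)

From HB Require Import structures.
From mathcomp Require Import all_boot all_order all_algebra.
From mathcomp Require Import all_classical all_reals all_analysis.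
From mathcomp.real_closed Require Import complex.

Set Implicit Arguments.
Unset Strict Implicit.
Unset Printing Implicit Defensive.

Import Order.TTheory GRing.Theory Num.Theory.
Local Open Scope classical_set_scope.
Local Open Scope ring_scope.

(* diameter of a set, with the convention diam(empty) = 0 *)
Definition diam {R : realType} {T : Type} (d : T -> T -> R) (A : set T) : \bar R :=
  ereal_sup ([set 0%E] `|` [set (d p.1 p.2)%:E | p in A `*` A]).

Definition delta_cover {R : realType} {T : Type} (d : T -> T -> R)
  (delta : R) (E : set T) (U : nat -> set T) : Prop :=
  E `<=` \bigcup_i U i /\ (forall i, (diam d (U i) <= delta%:E)%E).

Definition hausdorff_content {R : realType} {T : Type} (d : T -> T -> R)
  (s delta : R) (E : set T) : \bar R :=
  ereal_inf [set (\sum_(0 <= i <oo) ((fine (diam d (U i))) `^ s)%:E)%E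
            | U in [set U | delta_cover d delta E U]].

(* H^s(E) = lim_{delta -> 0+} H^s_delta(E) = sup_{delta > 0} H^s_delta(E) *)
Definition hausdorff_measure {R : realType} {T : Type} (d : T -> T -> R)
  (s : R) (E : set T) : \bar R :=
  ereal_sup [set hausdorff_content d s delta E | delta in [set delta : R | 0 < delta]].

Definition hausdorff_dim {R : realType} {T : Type} (d : T -> T -> R)
  (E : set T) : \bar R :=
  ereal_inf [set s%:E | s in [set s : R | 0 <= s /\ hausdorff_measure d s E = 0%E]].

Definition dist_R2 {R : realType} (p q : R * R) : R :=
  Num.sqrt ((p.1 - q.1) ^+ 2 + (p.2 - q.2) ^+ 2).

Definition dist_RC {R : realType} (p q : R * R[i]) : R :=
  Num.sqrt ((p.1 - q.1) ^+ 2 + (Normc.normc (p.2 - q.2)) ^+ 2).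

Definition graph {R : realType} {V : Type} (A : set R) (u : R -> V) : set (R * V) :=
  [set (x, u x) | x in A].

Definition continuous_on_C {R : realType} (A : set R) (f : R -> R[i]) : Prop :=
  forall x, A x -> forall e : R, 0 < e -> exists2 del : R, 0 < del &
    forall y, A y -> `|x - y| < del -> Normc.normc (f x - f y) < e.

Definition is_lipschitz_on {R : realType} (A : set R) (h : R -> R) : Prop :=
  exists L : R, forall x y, A x -> A y -> `|h x - h y| <= L * `|x - y|.

(* Lipschitz maps do not increase Hausdorff dimension.  The projection
   (x, g x + i h x) |-> (x, g x) (and likewise onto (x, h x)) is 1-Lipschitz
   from G(f) onto G(g), which gives (1).  Conversely, when h is L-Lipschitz,
   the lift (x, y) |-> (x, y + i h x) maps G(g) onto G(f) and is
   (1 + |L|)-Lipschitz, which gives the reverse inequality in (2). *)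

From HB Require Import structures.
From mathcomp Require Import all_boot all_order all_algebra.
From mathcomp Require Import all_classical all_reals all_analysis.
From mathcomp.real_closed Require Import complex.
From mathcomp Require Import lra.
Import Order.TTheory GRing.Theory Num.Theory.
Local Open Scope classical_set_scope.
Local Open Scope ring_scope.

Definition lipschitz_between {R : realType} {T1 T2 : Type}
    (d1 : T1 -> T1 -> R) (d2 : T2 -> T2 -> R) (C : R) (E : set T1)
    (phi : T1 -> T2) : Prop :=
  forall p q, E p -> E q -> d2 (phi p) (phi q) <= C * d1 p q.

Section HausdorffDimLipschitz.
Context {R : realType}.

Lemma diam_ge0 {T : Type} (d : T -> T -> R) (A : set T) : (0 <= diam d A)%E.
Proof. by apply: ereal_sup_ubound; left. Qed.

Lemma diam_fineK {T : Type} {d : T -> T -> R} {A : set T} {r : R} :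
  (diam d A <= r%:E)%E -> (fine (diam d A))%:E = diam d A.
Proof. by have := diam_ge0 d A; case: (diam d A). Qed.

Lemma hausdorff_content_ge0 {T : Type} (d : T -> T -> R) (s delta : R) (E : set T) :
  (0 <= hausdorff_content d s delta E)%E.
Proof.
apply: le_ereal_inf_tmp => _ [U _ <-]; apply: nneseries_ge0 => n _ _.
by rewrite lee_fin powR_ge0.
Qed.

Context {T1 T2 : Type} {d1 : T1 -> T1 -> R} {d2 : T2 -> T2 -> R}.
Context {C : R} {E : set T1} {phi : T1 -> T2}.
Hypotheses (C_gt0 : 0 < C) (phi_lip : lipschitz_between d1 d2 C E phi).

Lemma diam_image_le (U : set T1) :
  (diam d2 (phi @` (U `&` E)) <= C%:E * diam d1 U)%E.
Proof.
apply: ge_ereal_sup => x [->|].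
  by apply: mule_ge0; [rewrite lee_fin ltW | exact: diam_ge0].
move=> [[p q] [/= [u [Uu Eu] <-] [v [Uv Ev] <-]] <-].
apply: (@le_trans _ _ (C * d1 u v)%:E); first by rewrite lee_fin phi_lip.
rewrite EFinM; apply: lee_wpmul2l; first by rewrite lee_fin ltW.
by apply: ereal_sup_ubound; right; exists (u, v).
Qed.

Lemma hausdorff_content_image_le (s delta : R) (U : nat -> set T1) :
  0 <= s -> delta_cover d1 delta E U ->
  (hausdorff_content d2 s (C * delta) (phi @` E) <=
   (C `^ s)%:E * \sum_(0 <= i <oo) ((fine (diam d1 (U i))) `^ s)%:E)%E.
Proof.
move=> s_ge0 [EU diamU].
pose V i := phi @` (U i `&` E).
have diamV i : (diam d2 (V i) <= (C * delta)%:E)%E.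
  apply: le_trans (diam_image_le (U i)) _.
  by rewrite EFinM; apply: lee_wpmul2l => //; rewrite lee_fin ltW.
apply: ge_ereal_inf; exists (\sum_(0 <= i <oo) ((fine (diam d2 (V i))) `^ s)%:E)%E.
  exists V => //; split => // _ [x Ex <-].
  by have [i _ Uix] := EU x Ex; exists i => //; exists x.
rewrite -nneseriesZl; last by move=> i _; rewrite lee_fin powR_ge0.
apply: lee_nneseries => [i _ _|i _]; first by rewrite lee_fin powR_ge0.
have dU_ge0 : 0 <= fine (diam d1 (U i)).
  by rewrite -lee_fin (diam_fineK (diamU i)) diam_ge0.
rewrite -EFinM lee_fin -powRM ?(ltW C_gt0) //.
apply: ge0_ler_powR => //; rewrite ?nnegrE ?mulr_ge0 ?(ltW C_gt0) //.
  by rewrite -lee_fin (diam_fineK (diamV i)) diam_ge0.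
by rewrite -lee_fin EFinM (diam_fineK (diamV i)) (diam_fineK (diamU i)) diam_image_le.
Qed.

Lemma hausdorff_measure_image_eq0 (s : R) : 0 <= s ->
  hausdorff_measure d1 s E = 0%E -> hausdorff_measure d2 s (phi @` E) = 0%E.
Proof.
move=> s_ge0 HE0; apply/eqP; rewrite eq_le; apply/andP; split; last first.
  apply: le_ereal_sup_tmp; exists (hausdorff_content d2 s 1 (phi @` E)).
    by exists 1 => //=; rewrite ltr01.
  exact: hausdorff_content_ge0.
apply: ge_ereal_sup => _ [delta delta_gt0 <-].
have -> : delta = C * (delta / C) by rewrite mulrC divfK // gt_eqF.
have content0 : hausdorff_content d1 s (delta / C) E = 0%E.
  apply/eqP; rewrite eq_le hausdorff_content_ge0 andbT -HE0.
  by apply: ereal_sup_ubound; exists (delta / C) => //=; rewrite divr_gt0.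
have Cs_gt0 : 0 < C `^ s by rewrite powR_gt0.
apply/lee_addgt0Pr => e e_gt0; rewrite add0e.
have : (hausdorff_content d1 s (delta / C) E < (e / C `^ s)%:E)%E.
  by rewrite content0 lte_fin divr_gt0.
move=> /ereal_inf_lt [_ [U EU <-] sumU_lt].
apply: le_trans (hausdorff_content_image_le _ _ _ s_ge0 EU) _.
have -> : e = C `^ s * (e / C `^ s) by rewrite mulrC divfK // gt_eqF.
by rewrite EFinM; apply: lee_wpmul2l; [rewrite lee_fin ltW | exact: ltW].
Qed.

Lemma hausdorff_dim_image_le :
  (hausdorff_dim d2 (phi @` E) <= hausdorff_dim d1 E)%E.
Proof.
apply: ereal_inf_le_tmp => _ [s [s_ge0 Hs] <-].
by exists s => //; split => //; exact: hausdorff_measure_image_eq0.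
Qed.

End HausdorffDimLipschitz.

Lemma graph_comp {R : realType} {V W : Type} (A : set R) (f : R -> V) (g : V -> W) :
  graph A (fun x => g (f x)) = (fun p => (p.1, g p.2)) @` graph A f.
Proof.
apply/seteqP; split => [_ [x Ax <-]|_ [_ [x Ax <-] <-]]; last by exists x.
by exists (x, f x) => //; exists x.
Qed.

Lemma graph_complex_lift {R : realType} (A : set R) (f : R -> R[i]) :
  graph A f = (fun p : R * R => (p.1, (p.2 +i* complex.Im (f p.1))%C)) @`
              graph A (fun x => complex.Re (f x)).
Proof.
have fE x : f x = (complex.Re (f x) +i* complex.Im (f x))%C by case: (f x).
apply/seteqP; split => [_ [x Ax <-]|_ [_ [x Ax <-] <-]].
  by exists (x, complex.Re (f x)); [exists x | rewrite /= -fE].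
by exists x => //=; rewrite -fE.
Qed.

Lemma Re_graph_proj_lipschitz {R : realType} (E : set (R * R[i])) :
  lipschitz_between dist_RC dist_R2 1 E (fun p => (p.1, complex.Re p.2)).
Proof.
move=> [x [a b]] [y [c d]] _ _; rewrite /dist_R2 /dist_RC /= mul1r.
rewrite sqr_sqrtr ?addr_ge0 ?sqr_ge0 // ler_sqrt ?addr_ge0 ?sqr_ge0 //.
by rewrite lerD2l lerDl sqr_ge0.
Qed.

Lemma Im_graph_proj_lipschitz {R : realType} (E : set (R * R[i])) :
  lipschitz_between dist_RC dist_R2 1 E (fun p => (p.1, complex.Im p.2)).
Proof.
move=> [x [a b]] [y [c d]] _ _; rewrite /dist_R2 /dist_RC /= mul1r.
rewrite sqr_sqrtr ?addr_ge0 ?sqr_ge0 // ler_sqrt ?addr_ge0 ?sqr_ge0 //.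
by rewrite lerD2l lerDr sqr_ge0.
Qed.

Lemma complex_lift_lipschitz {R : realType} {A : set R} {f : R -> R[i]} {L : R} :
  (forall x y, A x -> A y -> `|complex.Im (f x) - complex.Im (f y)| <= L * `|x - y|) ->
  lipschitz_between dist_R2 dist_RC (1 + `|L|) (graph A (fun x => complex.Re (f x)))
    (fun p : R * R => (p.1, (p.2 +i* complex.Im (f p.1))%C)).
Proof.
move=> h_lip _ _ [x Ax <-] [y Ay <-]; rewrite /dist_RC /dist_R2 /=.
set u := complex.Re (f x) - complex.Re (f y).
set w := complex.Im (f x) - complex.Im (f y).
rewrite sqr_sqrtr ?addr_ge0 ?sqr_ge0 //.
have K_ge0 : 0 <= 1 + `|L| by rewrite addr_ge0.
rewrite -[1 + `|L|]ger0_norm // -sqrtr_sqr -sqrtrM ?sqr_ge0 //.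
rewrite ler_sqrt ?mulr_ge0 ?addr_ge0 ?sqr_ge0 //.
have w2_le : w ^+ 2 <= `|L| ^+ 2 * (x - y) ^+ 2.
  rewrite -real_normK ?num_real // -[(x - y) ^+ 2]real_normK ?num_real // -exprMn.
  rewrite lerXn2r ?nnegrE ?mulr_ge0 //.
  by apply: le_trans (h_lip x y Ax Ay) _; rewrite ler_wpM2r // real_ler_norm ?num_real.
have := sqr_ge0 (x - y); have := sqr_ge0 u; have := normr_ge0 L.
nra.
Qed.

Theorem mainTheorem1 (R : realType) (a b : R) (f : R -> R[i]) :
  a < b ->
  continuous_on_C `[a, b] f ->
  (Order.max (hausdorff_dim dist_R2 (graph `[a, b] (fun x => @complex.Re R (f x))))
             (hausdorff_dim dist_R2 (graph `[a, b] (fun x => @complex.Im R (f x))))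
     <= hausdorff_dim dist_RC (graph `[a, b] f))%E
  /\
  (is_lipschitz_on `[a, b] (fun x => @complex.Im R (f x)) ->
   hausdorff_dim dist_RC (graph `[a, b] f)
     = hausdorff_dim dist_R2 (graph `[a, b] (fun x => @complex.Re R (f x)))).
Proof.
move=> _ _.
have dim_Re_le : (hausdorff_dim dist_R2 (graph `[a, b] (fun x => complex.Re (f x)))
                  <= hausdorff_dim dist_RC (graph `[a, b] f))%E.
  by rewrite graph_comp; exact: hausdorff_dim_image_le ltr01 (Re_graph_proj_lipschitz _).
split.
  rewrite ge_max dim_Re_le graph_comp /=.
  exact: hausdorff_dim_image_le ltr01 (Im_graph_proj_lipschitz _).
move=> [L h_lip]; apply/eqP; rewrite eq_le dim_Re_le andbT {1}graph_complex_lift.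
have K_gt0 : 0 < 1 + `|L| by rewrite ltr_pwDl.
exact: (hausdorff_dim_image_le K_gt0 (complex_lift_lipschitz h_lip)).
Qed.
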